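(* Let $\mathcal A_V$ be the algebra of Laurent polynomials in $a_V,b_V,c_V,d_V$ with the log-canonical Poisson bracket $\{a_V,b_V\}=a_Vb_V$, $\{a_V,c_V\}=0$, $\{a_V,d_V\}=-\tfrac12 a_Vd_V$, $\{b_V,c_V\}=0$, $\{b_V,d_V\}=-\tfrac12 b_Vd_V$, $\{c_V,d_V\}=-\tfrac12 c_Vd_V$. Let $\mathcal A_{IV}$ be the algebra of Laurent polynomials in $a,b,c,d,e,f,h$ with the log-canonical bracket $\{a,b\}=0,\ \{a,c\}=-\tfrac12 ac,\ \{a,d\}=-\tfrac12 ad,\ \{a,e\}=0,\ \{a,f\}=\tfrac12 af,\ \{a,h\}=\tfrac12 ah,$ $\{b,c\}=\tfrac14 bc,\ \{b,d\}=0,\ \{b,e\}=\tfrac14 be,\ \{b,f\}=\tfrac14 bf,\ \{b,h\}=-\tfrac14 bh,$ $\{c,d\}=-\tfrac14 cd,\ \{c,e\}=\tfrac14 ce,\ \{c,f\}=0,\ \{c,h\}=\tfrac14 ch,$ $\{d,e\}=-\tfrac14 de,\ \{d,f\}=\tfrac14 df,\ \{d,h\}=\tfrac14 dh,$ $\{e,f\}=-\tfrac14 ef,\ \{e,h\}=0,\ \{f,h\}=\tfrac14 fh$. Then the assignment $a_V\mapsto ab^2$, $b_V\mapsto bf$, $c_V\mapsto bc$, $d_V\mapsto bd$ defines an injective Poisson homomorphism $\mathcal A_V\to\mathcal A_{IV}$, so that $\mathcal A_V$ is realised as the Poisson subalgebra of $\mathcal A_{IV}$ of functions of $ab^2,bf,bc,bd$;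 moreover $h$ Poisson commutes with this subalgebra.
   Context: A log-canonical bracket is extended from the generators to all Laurent polynomials by bilinearity, antisymmetry and the Leibniz rule. *)

From HB Require Import structures.
From mathcomp Require Import all_boot all_order all_algebra.
From mathcomp Require Import finmap.
Set Implicit Arguments. Unset Strict Implicit. Unset Printing Implicit Defensive.
Import Order.TTheory GRing.Theory Num.Theory.
Local Open Scope ring_scope.


(* Laurent polynomials in n variables x_0..x_{n-1} over K:
   finitely supported maps from exponent vectors (Z^n = 'rV[int]_n) to K.
   p alpha is the coefficient of the monomial x^alpha. *)
Definition laurent (K : fieldType) (n : nat) := {fsfun 'rV[int]_n -> K with 0}.

Section Laurent.
Variables (K : fieldType) (n : nat).
Implicit Types (p q : laurent K n) (c : K) (a b : 'rV[int]_n).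

Definition lmono a c : laurent K n := [fsfun x in [fset a]%fset => c | 0].

Definition lvar (i : 'I_n) : laurent K n := lmono (delta_mx 0 i) 1.

Definition lone : laurent K n := lmono 0 1.

Definition lzero : laurent K n := lmono 0 0.

Definition ladd p q : laurent K n :=
  [fsfun x in (finsupp p `|` finsupp q)%fset => p x + q x | 0].

Definition lscale c p : laurent K n :=
  [fsfun x in finsupp p => c * p x | 0].

Definition lmul p q : laurent K n :=
  [fsfun g in [fset (a + b)%R | a in finsupp p, b in finsupp q]%fset =>
     \sum_(a <- finsupp p) \sum_(b <- finsupp q)
        (if (a + b)%R == g then p a * q b else 0) | 0].

(* The log-canonical bracket with (skew) coefficient matrix Omega, i.e.
   {x_i, x_j} = Omega i j * x_i x_j, extended by bilinearity, antisymmetry and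
   Leibniz.  On monomials this is {x^a, x^b} = (a Omega b^T) x^(a+b). *)
Definition lc_pairing (Omega : 'M[K]_n) a b : K :=
  \sum_(i < n) \sum_(j < n) ((a 0 i)%:~R * (b 0 j)%:~R * Omega i j).

Definition lbracket (Omega : 'M[K]_n) p q : laurent K n :=
  [fsfun g in [fset (a + b)%R | a in finsupp p, b in finsupp q]%fset =>
     \sum_(a <- finsupp p) \sum_(b <- finsupp q)
        (if (a + b)%R == g then p a * q b * lc_pairing Omega a b else 0) | 0].

End Laurent.

Definition skew_of (K : fieldType) (n : nat) (up : nat -> nat -> K) : 'M[K]_n :=
  \matrix_(i < n, j < n)
    (if (i < j)%N then up i j else if (j < i)%N then - up j i else 0).

(* A_V: variables a_V,b_V,c_V,d_V = x_0,x_1,x_2,x_3 *)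
Definition upV (K : fieldType) (i j : nat) : K :=
  let h := (2%:R)^-1 in
  match i, j with
  | 0, 1 => 1
  | 0, 2 => 0
  | 0, 3 => - h
  | 1, 2 => 0
  | 1, 3 => - h
  | 2, 3 => - h
  | _, _ => 0
  end.

Definition OmegaV (K : fieldType) : 'M[K]_4 := skew_of 4 (@upV K).

(* A_IV: variables a,b,c,d,e,f,h = x_0,...,x_6 *)
Definition upIV (K : fieldType) (i j : nat) : K :=
  let h := (2%:R)^-1 in
  let q := (4%:R)^-1 in
  match i, j with
  | 0, 1 => 0 | 0, 2 => - h | 0, 3 => - h | 0, 4 => 0 | 0, 5 => h | 0, 6 => h
  | 1, 2 => q | 1, 3 => 0 | 1, 4 => q | 1, 5 => q | 1, 6 => - q
  | 2, 3 => - q | 2, 4 => q | 2, 5 => 0 | 2, 6 => q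
  | 3, 4 => - q | 3, 5 => q | 3, 6 => q
  | 4, 5 => - q | 4, 6 => 0
  | 5, 6 => q
  | _, _ => 0
  end.

Definition OmegaIV (K : fieldType) : 'M[K]_7 := skew_of 7 (@upIV K).

From HB Require Import structures.
From mathcomp Require Import all_boot all_order all_algebra.
From mathcomp Require Import finmap ring.
Set Implicit Arguments. Unset Strict Implicit.
Import GRing.Theory.
Local Open Scope ring_scope.

(* The map is the monomial map x^a |-> x^(a E) given by the integer matrix E
   whose rows are the exponent vectors of ab^2, bf, bc, bd.  Since E has an
   integer right inverse, distinct monomials go to distinct monomials, so the
   map is an injective algebra homomorphism.  The log-canonical bracket of
   x^a and x^b is (a Omega b^T) x^(a+b), so the map is Poisson exactly when
   E Omega_IV E^T = Omega_V, and h commutes with the image exactly when the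
   row e_h Omega_IV E^T vanishes; both are finite computations. *)

Section Convolution.
Variables (K : fieldType) (n : nat).
Implicit Types (p q : laurent K n) (a b g : 'rV[int]_n).

Lemma fsfun_coef (S : {fset 'rV[int]_n}) (F : 'rV[int]_n -> K) g :
  (forall g, g \notin S -> F g = 0) -> [fsfun x in S => F x | 0] g = F g.
Proof. by move=> F0; rewrite fsfun_fun; case: ifPn => // /F0 ->. Qed.

Lemma big_finsupp_fset p (S : {fset 'rV[int]_n}) (G : 'rV[int]_n -> K) :
  (forall a, a \notin S -> p a = 0) -> (forall a, p a = 0 -> G a = 0) ->
  \sum_(a <- finsupp p) G a = \sum_(a <- S) G a.
Proof.
move=> pS G0; apply: big_fset_incl => [|a _].
  by apply/fsubsetP => a; rewrite mem_finsupp; apply: contraR => /pS ->.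
by rewrite memNfinsupp => /eqP /G0.
Qed.

Definition lconv (W : 'rV[int]_n -> 'rV[int]_n -> K) p q : laurent K n :=
  [fsfun g in [fset (a + b)%R | a in finsupp p, b in finsupp q]%fset =>
     \sum_(a <- finsupp p) \sum_(b <- finsupp q)
        (if (a + b)%R == g then p a * q b * W a b else 0) | 0].

Lemma lconvE W p q g : lconv W p q g =
  \sum_(a <- finsupp p) \sum_(b <- finsupp q)
     (if a + b == g then p a * q b * W a b else 0).
Proof.
apply: fsfun_coef => {}g gNS; apply: big1_seq => a /= ap; apply: big1_seq => b /= bq.
case: eqP => // abg; case/negP: gNS; rewrite -abg.
by apply/imfset2P; exists a => //; exists b.
Qed.

Lemma lmul_lconv p q : lmul p q = lconv (fun _ _ => 1) p q.
Proof.
apply/fsfunP => g; rewrite !fsfun_fun; case: ifP => // _.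
by apply: eq_bigr => a _; apply: eq_bigr => b _; rewrite mulr1.
Qed.

Lemma lbracket_lconv (Omega : 'M[K]_n) p q :
  lbracket Omega p q = lconv (lc_pairing Omega) p q.
Proof. by []. Qed.

Lemma lmonoE a (c : K) g : lmono a c g = if g == a then c else 0.
Proof. by rewrite fsfun_fun inE. Qed.

Lemma laddE p q g : ladd p q g = p g + q g.
Proof.
apply: fsfun_coef => {}g; rewrite inE negb_or !memNfinsupp.
by case/andP=> /eqP -> /eqP ->; rewrite addr0.
Qed.

Lemma lscaleE (c : K) p g : lscale c p g = c * p g.
Proof. by apply: fsfun_coef => {}g; rewrite memNfinsupp => /eqP ->; rewrite mulr0. Qed.

Lemma lmul_mono a b (c d : K) : lmul (lmono a c) (lmono b d) = lmono (a + b) (c * d).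
Proof.
apply/fsfunP => g; rewrite lmul_lconv lconvE.
rewrite (@big_finsupp_fset _ [fset a]%fset); first last.
- by move=> x ->; apply: big1 => y _; rewrite !mul0r if_same.
- by move=> x; rewrite inE lmonoE => /negPf ->.
rewrite big_seq_fset1 (@big_finsupp_fset _ [fset b]%fset); first last.
- by move=> y ->; rewrite mulr0 mul0r if_same.
- by move=> y; rewrite inE lmonoE => /negPf ->.
by rewrite big_seq_fset1 !lmonoE !eqxx mulr1 eq_sym.
Qed.

Lemma lconv_eq0 W p q :
  (forall a b, p a != 0 -> q b != 0 -> W a b = 0) -> lconv W p q = lzero K n.
Proof.
move=> W0; apply/fsfunP => g; rewrite lconvE /lzero lmonoE if_same.
apply: big1_seq => a /= /[!mem_finsupp] pa; apply: big1_seq => b /= /[!mem_finsupp] qb.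
by rewrite W0 // mulr0 if_same.
Qed.

End Convolution.

Section MonomialMap.
Variables (K : fieldType) (m n : nat).
Variables (emb : 'rV[int]_m -> 'rV[int]_n) (proj : 'rV[int]_n -> 'rV[int]_m).
Hypotheses (embD : {morph emb : a b / a + b}) (embK : cancel emb proj).
Implicit Types (p q : laurent K m).

Let emb_inj : injective emb := can_inj embK.

Definition lmonomap p : laurent K n :=
  [fsfun g in [fset emb a | a in finsupp p]%fset =>
     \sum_(a <- finsupp p) (if emb a == g then p a else 0) | 0].

Lemma lmonomapE p g : lmonomap p g = \sum_(a <- finsupp p) (if emb a == g then p a else 0).
Proof.
apply: fsfun_coef => {}g gNS; apply: big1_seq => a /= ap.
case: eqP => // ag; case/negP: gNS; rewrite -ag; apply/imfsetP; by exists a.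
Qed.

Lemma lmonomap_emb p c : lmonomap p (emb c) = p c.
Proof.
rewrite lmonomapE; have [cp|cNp] := boolP (c \in finsupp p).
  rewrite (bigD1_seq c) //= ?fset_uniq // eqxx big1 ?addr0 // => a ac.
  by rewrite (inj_eq emb_inj) (negbTE ac).
move: (cNp); rewrite memNfinsupp => /eqP ->; apply: big1_seq => a /= ap.
by rewrite (inj_eq emb_inj); case: eqP => // ac; rewrite -ac ap in cNp.
Qed.

Lemma lmonomap_out p g : emb (proj g) != g -> lmonomap p g = 0.
Proof.
move=> gNim; rewrite lmonomapE big1 // => a _.
by case: eqP => // ag; rewrite -ag embK eqxx in gNim.
Qed.

Lemma lmonomap_supp p g : lmonomap p g != 0 -> emb (proj g) = g.
Proof. by apply: contraNeq => /lmonomap_out ->. Qed.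

Lemma lmonomap_ext p (Y : laurent K n) :
  (forall c, Y (emb c) = p c) -> (forall g, emb (proj g) != g -> Y g = 0) ->
  lmonomap p = Y.
Proof.
move=> Yim YNim; apply/fsfunP => g; have [<-|gNim] := eqVneq (emb (proj g)) g.
  by rewrite lmonomap_emb Yim.
by rewrite lmonomap_out // YNim.
Qed.

Lemma big_finsupp_lmonomap p (G : 'rV[int]_n -> K) :
  (forall g, lmonomap p g = 0 -> G g = 0) ->
  \sum_(g <- finsupp (lmonomap p)) G g = \sum_(a <- finsupp p) G (emb a).
Proof.
move=> G0; rewrite (@big_finsupp_fset _ _ _ [fset emb a | a in finsupp p]%fset) //.
  by rewrite big_imfset //= => a b _ _; apply: emb_inj.
by move=> g gNS; rewrite fsfun_fun (negbTE gNS).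
Qed.

Lemma lconv_lmonomapE W p q g : lconv W (lmonomap p) (lmonomap q) g =
  \sum_(a <- finsupp p) \sum_(b <- finsupp q)
     (if emb a + emb b == g then p a * q b * W (emb a) (emb b) else 0).
Proof.
rewrite lconvE big_finsupp_lmonomap => [|x ->]; last first.
  by apply: big1 => y _; rewrite !mul0r if_same.
apply: eq_bigr => a _; rewrite big_finsupp_lmonomap => [|y ->]; last first.
  by rewrite mulr0 mul0r if_same.
by apply: eq_bigr => b _; rewrite !lmonomap_emb.
Qed.

Lemma lmonomap_lconv W W' p q : (forall a b, W' (emb a) (emb b) = W a b) ->
  lmonomap (lconv W p q) = lconv W' (lmonomap p) (lmonomap q).
Proof.
move=> WW'; apply: lmonomap_ext => [c|g gNim]; rewrite lconv_lmonomapE.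
  rewrite lconvE; apply: eq_bigr => a _; apply: eq_bigr => b _.
  by rewrite -embD (inj_eq emb_inj) WW'.
apply: big1 => a _; apply: big1 => b _; rewrite -embD; case: eqP => // abg.
by rewrite -abg embK eqxx in gNim.
Qed.

Lemma lmonomapD p q : lmonomap (ladd p q) = ladd (lmonomap p) (lmonomap q).
Proof.
apply: lmonomap_ext => [c|g gNim]; first by rewrite !laddE !lmonomap_emb.
by rewrite laddE !lmonomap_out ?addr0.
Qed.

Lemma lmonomapZ k p : lmonomap (lscale k p) = lscale k (lmonomap p).
Proof.
apply: lmonomap_ext => [c|g gNim]; first by rewrite !lscaleE lmonomap_emb.
by rewrite lscaleE lmonomap_out ?mulr0.
Qed.

Lemma lmonomapM p q : lmonomap (lmul p q) = lmul (lmonomap p) (lmonomap q).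
Proof. by rewrite !lmul_lconv; apply: lmonomap_lconv. Qed.

Lemma lmonomap_mono a (c : K) : lmonomap (lmono a c) = lmono (emb a) c.
Proof.
apply: lmonomap_ext => [c'|g gNim]; first by rewrite !lmonoE (inj_eq emb_inj).
by rewrite lmonoE; case: eqP => // ga; rewrite ga embK eqxx in gNim.
Qed.

Lemma lmonomap_inj : injective lmonomap.
Proof. by move=> p q pq; apply/fsfunP => c; rewrite -lmonomap_emb pq lmonomap_emb. Qed.

End MonomialMap.

Lemma lc_pairingE (K : fieldType) n (Omega : 'M[K]_n) (a b : 'rV[int]_n) :
  lc_pairing Omega a b = (map_mx intr a *m Omega *m (map_mx intr b)^T) 0 0.
Proof.
rewrite /lc_pairing mxE exchange_big; apply: eq_bigr => j _.
by rewrite !mxE big_distrl; apply: eq_bigr => i _; rewrite !mxE mulrAC.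
Qed.

Lemma lc_pairing_mulmx (K : fieldType) n k (Omega : 'M[K]_n) (E : 'M[int]_(k, n))
    (a b : 'rV[int]_k) :
  lc_pairing Omega (a *m E) (b *m E)
  = lc_pairing (map_mx intr E *m Omega *m (map_mx intr E)^T) a b.
Proof. rewrite !lc_pairingE !map_mxM !trmx_mul !mulmxA; reflexivity. Qed.

Lemma lc_pairing_mulmxr_eq0 (K : fieldType) n k (Omega : 'M[K]_n) (E : 'M[int]_(k, n))
    (c : 'rV[int]_n) (b : 'rV[int]_k) :
  map_mx intr c *m Omega *m (map_mx intr E)^T = 0 -> lc_pairing Omega c (b *m E) = 0.
Proof. by move=> cE0; rewrite lc_pairingE map_mxM trmx_mul !mulmxA cE0 !mul0mx mxE. Qed.

Definition expIV (i j : nat) : nat :=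
  match i, j with
  | 0, 0 => 1 | 0, 1 => 2
  | _, 1 => 1 | 1, 5 => 1 | 2, 2 => 1 | 3, 3 => 1
  | _, _ => 0
  end.

Definition EIV : 'M[int]_(4, 7) := \matrix_(i, j) (expIV i j)%:Z.

(* a_V, b_V, c_V, d_V are read off the exponents of a, f, c, d. *)
Definition PIV : 'M[int]_(7, 4) :=
  \matrix_(j, i)
    (if (nat_of_ord j, nat_of_ord i) \in [:: (0, 0); (5, 1); (2, 2); (3, 3)]%N then 1 else 0).

Lemma mulmx_EIV_PIV : EIV *m PIV = 1%:M.
Proof.
apply/matrixP => i j; rewrite !mxE !big_ord_recr big_ord0 /= !mxE.
by case: i j => [[|[|[|[|i]]]] ?] // [[|[|[|[|j]]]] ?].
Qed.

Lemma EIV_rows :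
  [/\ row (@Ordinal 4 0 isT) EIV = 'e_(@Ordinal 7 0 isT) + ('e_(@Ordinal 7 1 isT) + 'e_(@Ordinal 7 1 isT)),
      row (@Ordinal 4 1 isT) EIV = 'e_(@Ordinal 7 1 isT) + 'e_(@Ordinal 7 5 isT),
      row (@Ordinal 4 2 isT) EIV = 'e_(@Ordinal 7 1 isT) + 'e_(@Ordinal 7 2 isT) &
      row (@Ordinal 4 3 isT) EIV = 'e_(@Ordinal 7 1 isT) + 'e_(@Ordinal 7 3 isT)].
Proof. by split; apply/rowP => j; rewrite !mxE; case: j => [[|[|[|[|[|[|[|j]]]]]]] ?]. Qed.

Section Computations.
Variables (K : fieldType) (two_neq0 : (2%:R : K) != 0).

Let four_neq0 : (4%:R : K) != 0.
Proof. by rewrite (_ : 4 = 2 * 2)%N // natrM mulf_neq0. Qed.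

Lemma congr_OmegaIV : map_mx intr EIV *m OmegaIV K *m (map_mx intr EIV)^T = OmegaV K.
Proof.
apply/matrixP => i j; rewrite !mxE.
rewrite !big_ord_recr !big_ord0 /= !mxE !big_ord_recr !big_ord0 /= !mxE /=.
by case: i j => [[|[|[|[|i]]]] ?] // [[|[|[|[|j]]]] ?] //=; field; rewrite ?two_neq0 ?four_neq0.
Qed.

Lemma OmegaIV_h_EIV :
  (delta_mx 0 (@Ordinal 7 6 isT) : 'rV[K]_7) *m OmegaIV K *m (map_mx intr EIV)^T = 0.
Proof.
apply/rowP => j; rewrite !mxE.
rewrite !big_ord_recr !big_ord0 /= !mxE !big_ord_recr !big_ord0 /= !mxE /=.
by case: j => [[|[|[|[|j]]]] ?] //=; field; rewrite ?two_neq0 ?four_neq0.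
Qed.

End Computations.

Theorem mainTheorem4 (K : fieldType) (charK0 : [pchar K] =i pred0) :
  let xV := @lvar K 4 in
  let x := @lvar K 7 in
  let a := x (@Ordinal 7 0 isT) in
  let b := x (@Ordinal 7 1 isT) in
  let c := x (@Ordinal 7 2 isT) in
  let d := x (@Ordinal 7 3 isT) in
  let f := x (@Ordinal 7 5 isT) in
  let h := x (@Ordinal 7 6 isT) in
  exists phi : laurent K 4 -> laurent K 7,
    [/\ (* phi is a K-algebra homomorphism *)
        (forall p q, phi (ladd p q) = ladd (phi p) (phi q)),
        (forall (k : K) p, phi (lscale k p) = lscale k (phi p)),
        (forall p q, phi (lmul p q) = lmul (phi p) (phi q)),
        phi (lone K 4) = lone K 7 &
     [/\ (* determined by the assignment on the generators *)
        phi (xV (@Ordinal 4 0 isT)) = lmul a (lmul b b),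
        phi (xV (@Ordinal 4 1 isT)) = lmul b f,
        phi (xV (@Ordinal 4 2 isT)) = lmul b c,
        phi (xV (@Ordinal 4 3 isT)) = lmul b d &
     [/\ (* Poisson *)
        (forall p q, phi (lbracket (OmegaV K) p q)
                     = lbracket (OmegaIV K) (phi p) (phi q)),
        (* injective *)
        injective phi &
        (* h Poisson commutes with the image *)
        (forall p, lbracket (OmegaIV K) h (phi p) = lzero K 7)]]].
Proof.
move=> xV x a b c d f h.
have two_neq0 : (2%:R : K) != 0 by move/pcharf0P: charK0 => ->.
have embD : {morph @mulmxr _ 1 _ _ EIV : u v / u + v} by move=> u v; rewrite /mulmxr mulmxDl.
have embK : cancel (@mulmxr _ 1 _ _ EIV) (mulmxr PIV).
  by move=> u; rewrite /= -mulmxA mulmx_EIV_PIV mulmx1.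
exists (lmonomap (mulmxr EIV)); split.
- exact: lmonomapD embK.
- exact: lmonomapZ embK.
- exact: lmonomapM embD embK.
- by rewrite /lone (lmonomap_mono embK) /= mul0mx.
- rewrite /xV /a /b /c /d /f /x /lvar !(lmonomap_mono embK) !lmul_mono !mulr1.
  rewrite /= -!rowE; case: EIV_rows => -> -> -> ->; split=> //.
split.
- move=> p q; rewrite !lbracket_lconv; apply: (lmonomap_lconv embD embK) => u v.
  by rewrite /= lc_pairing_mulmx congr_OmegaIV.
- exact: lmonomap_inj embK.
- move=> p; rewrite lbracket_lconv; apply: lconv_eq0 => u v.
  rewrite /h /x /lvar lmonoE; case: ifP => [/eqP -> _|_]; last by rewrite eqxx.
  move=> /(lmonomap_supp embK) <-.
  by apply: lc_pairing_mulmxr_eq0; rewrite map_delta_mx OmegaIV_h_EIV.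
Qed.
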